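(* Let $L$ be a lattice. Then the following are equivalent: (i) $L$ has permutable congruences; (ii) for all elements $a,b,c\in L$ with $a\leq c\leq b$, there exists $x\in L$ such that $a\equiv_{\Theta(c,b)}x$ and $x\equiv_{\Theta(a,c)}b$.
   Context: For binary relations $\alpha,\beta$ on a set $A$, $\alpha\beta=\{(x,y)\in A\times A : \exists z\in A,\ (x,z)\in\alpha \text{ and } (z,y)\in\beta\}$. We write $x\equiv_\alpha y$ for $(x,y)\in\alpha$. For a lattice $L$ and $x,y\in L$, $\Theta(x,y)=\Theta_L(x,y)$ denotes the least congruence of $L$ identifying $x$ and $y$. A lattice $L$ has permutable congruences if $\alpha\beta=\beta\alpha$ for all congruences $\alpha,\beta$ of $L$. *)

From mathcomp Require Import all_boot all_order.
Set Implicit Arguments. Unset Strict Implicit. Unset Printing Implicit Defensive.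
Import Order.LTheory.
Local Open Scope order_scope.

Definition lrel (T : Type) := T -> T -> Prop.

Definition relprod (T : Type) (alpha beta : lrel T) : lrel T :=
  fun x y => exists z, alpha x z /\ beta z y.

Definition is_congruence (d : Order.disp_t) (L : latticeType d) (th : lrel L) : Prop :=
  [/\ (forall x, th x x),
      (forall x y, th x y -> th y x),
      (forall x y z, th x y -> th y z -> th x z),
      (forall x y u v, th x y -> th u v -> th (x `&` u) (y `&` v)) &
      (forall x y u v, th x y -> th u v -> th (x `|` u) (y `|` v))].

Definition Theta (d : Order.disp_t) (L : latticeType d) (a b : L) : lrel L :=
  fun u v => forall th : lrel L, is_congruence th -> th a b -> th u v.

Definition permutable_congruences (d : Order.disp_t) (L : latticeType d) : Prop :=
  forall alpha beta : lrel L, is_congruence alpha -> is_congruence beta ->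
    forall x y, relprod alpha beta x y <-> relprod beta alpha x y.

From mathcomp Require Import all_boot all_order.
Set Implicit Arguments. Unset Strict Implicit. Unset Printing Implicit Defensive.
Import Order.LTheory.
Local Open Scope order_scope.

(* (ii) => (i): given x alpha z beta y, put n := x /\ y /\ z.  Meeting with z
   gives x alpha (x /\ z) beta n and n alpha (y /\ z) beta y, both along chains
   n <= x /\ z <= x and n <= y /\ z <= y.  Condition (ii) swaps the two steps of
   each chain, giving x beta w1 alpha n and n beta w2 alpha y, and then
   x = x \/ n beta w1 \/ w2 alpha n \/ y = y. *)

Section Congruence.
Variables (d : Order.disp_t) (L : latticeType d) (th : lrel L).
Hypothesis thC : is_congruence th.

Lemma cong_refl x : th x x.
Proof. by case: thC. Qed.

Lemma cong_sym x y : th x y -> th y x.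
Proof. by case: thC => _ sym _ _ _; apply: sym. Qed.

Lemma cong_trans x y z : th x y -> th y z -> th x z.
Proof. by case: thC => _ _ trans _ _; apply: trans. Qed.

Lemma cong_meet x y u v : th x y -> th u v -> th (x `&` u) (y `&` v).
Proof. by case: thC => _ _ _ meet _; apply: meet. Qed.

Lemma cong_join x y u v : th x y -> th u v -> th (x `|` u) (y `|` v).
Proof. by case: thC => _ _ _ _ join; apply: join. Qed.

Lemma cong_meet2l w u v : th u v -> th (w `&` u) (w `&` v).
Proof. exact/cong_meet/cong_refl. Qed.

Lemma cong_meet_absorb u v : th u v -> th u (u `&` v).
Proof. by move/(cong_meet2l u); rewrite meetxx. Qed.

Lemma cong_meet_step w u v : th u v -> th (w `&` u) (w `&` u `&` v).
Proof. by move/(cong_meet2l (w `&` u)); rewrite -meetA meetxx. Qed.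

End Congruence.

Section Theta.
Variables (d : Order.disp_t) (L : latticeType d).

Lemma Theta_congruence (a b : L) : is_congruence (Theta a b).
Proof.
split.
- by move=> x th thC _; apply: cong_refl.
- by move=> x y Hxy th thC Hab; apply: cong_sym (Hxy _ _ Hab).
- by move=> x y z Hxy Hyz th thC Hab; apply: cong_trans (Hxy _ _ Hab) (Hyz _ _ Hab).
- by move=> x y u v Hxy Huv th thC Hab; apply: cong_meet (Hxy _ _ Hab) (Huv _ _ Hab).
- by move=> x y u v Hxy Huv th thC Hab; apply: cong_join (Hxy _ _ Hab) (Huv _ _ Hab).
Qed.

Lemma Theta_pair (a b : L) : Theta a b a b.
Proof. by move=> th _. Qed.

Definition Theta_chain_permutable :=
  forall a b c : L, a <= c -> c <= b ->
    exists x : L, Theta c b a x /\ Theta a c x b.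

Lemma permutable_Theta_chain : permutable_congruences L -> Theta_chain_permutable.
Proof.
move=> perm a b c _ _.
have acb : relprod (Theta a c) (Theta c b) a b.
  by exists c; split; apply: Theta_pair.
by have [x [ax xb]] := (perm _ _ (Theta_congruence a c) (Theta_congruence c b) a b).1 acb;
  exists x.
Qed.

Section ChainPermutable.
Hypothesis chainP : Theta_chain_permutable.

Lemma chain_permute (alpha beta : lrel L) (a b c : L) :
  is_congruence alpha -> is_congruence beta -> a <= c -> c <= b ->
  beta a c -> alpha c b -> exists w, alpha a w /\ beta w b.
Proof.
move=> alphaC betaC ac cb betaac alphacb.
have [w [aw wb]] := chainP ac cb.
by exists w; split; [apply: aw | apply: wb].
Qed.

Lemma relprod_swap (alpha beta : lrel L) (x y : L) :
  is_congruence alpha -> is_congruence beta -> relprod alpha beta x y -> relprod beta alpha x y.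
Proof.
move=> alphaC betaC [z [alphaxz betazy]].
set n := x `&` y `&` z.
have n_le_xz : n <= x `&` z by rewrite /n meetAC leIl.
have n_le_yz : n <= y `&` z by rewrite /n -meetA leIr.
have alpha_x : alpha (x `&` z) x := cong_sym alphaC (cong_meet_absorb alphaC alphaxz).
have beta_y : beta y (y `&` z) := cong_meet_absorb betaC (cong_sym betaC betazy).
have beta_xz : beta n (x `&` z).
  by apply: cong_sym => //; have := cong_meet_step betaC x betazy; rewrite meetAC.
have alpha_yz : alpha n (y `&` z).
  apply: cong_sym => //; have := cong_meet_step alphaC y (cong_sym alphaC alphaxz).
  by rewrite meetAC [y `&` x]meetC.
have [w1 [alphanw1 betaw1x]] := chain_permute alphaC betaC n_le_xz (leIl _ _) beta_xz alpha_x.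
have [w2 [betanw2 alphaw2y]] :=
  chain_permute betaC alphaC n_le_yz (leIl _ _) alpha_yz (cong_sym betaC beta_y).
exists (w1 `|` w2); split.
- have := cong_join betaC (cong_sym betaC betaw1x) betanw2.
  by rewrite (join_l (_ : n <= x)) // /n -meetA leIl.
- have := cong_join alphaC (cong_sym alphaC alphanw1) alphaw2y.
  by rewrite (join_r (_ : n <= y)) // /n meetAC leIr.
Qed.

End ChainPermutable.

Lemma Theta_chain_permutable_congruences :
  Theta_chain_permutable -> permutable_congruences L.
Proof. by move=> chainP alpha beta alphaC betaC x y; split; apply: relprod_swap. Qed.

End Theta.

Theorem proposition1p1 (d : Order.disp_t) (L : latticeType d) :
  permutable_congruences L <->
  (forall a b c : L, a <= c -> c <= b ->
     exists x : L, Theta c b a x /\ Theta a c x b).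
Proof.
split; [exact: permutable_Theta_chain | exact: Theta_chain_permutable_congruences].
Qed.
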